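(* Let $G$ be a circle of circumference $1$ and $n\ge1$. The mechanism $M$ (LRM when the agents lie on one semicircle, RC otherwise) is strategyproof, and for every $\mathbf{x}\in G^n$, $\mathrm{mc}(M(\mathbf{x}),\mathbf{x})\le\frac32\min_{y\in G}\mathrm{mc}(y,\mathbf{x})$.
   Context: $G$ is a circle of circumference $1$; $d(x,y)$ is the length of the shorter arc between $x,y$; $\hat{x}$ denotes the antipodal point of $x$. Agents $N=\{1,\dots,n\}$ have locations $\mathbf{x}\in G^n$. For a distribution $P$ on $G$: $\mathrm{cost}(P,x_i)=\mathbb{E}_{y\sim P}[d(x_i,y)]$ and $\mathrm{mc}(P,\mathbf{x})=\mathbb{E}_{y\sim P}[\max_{i}d(y,x_i)]$. A mechanism $f:G^n\to\Delta(G)$ is strategyproof if $\mathrm{cost}(f(x_i',\mathbf{x}_{-i}),x_i)\ge\mathrm{cost}(f(\mathbf{x}),x_i)$ for all $\mathbf{x},i,x_i'$. The agents are on one semicircle if all $x_i$ lie in some closed arc of length $1/2$. LRM mechanism (used when agents are on one semicircle): fix a closed arc of minimal length containing all $x_i$ (its length is at most $1/2$; its endpoints $l,r$ are agent locations); return $l$ with probability $1/4$, $r$ with probability $1/4$, and the midpoint $\mathrm{cen}(l,r)$ of that arc with probability $1/2$. RC (Random Center) mechanism (used when agents are not on one semicircle): the antipodal points $\hat{x}_1,\dots,\hat{x}_n$ partition $G$ into arcs between cyclically consecutive antipodal points; choose a point $y$ uniformly at random on $G$ and return the midpoint of the arc of this partition containing $y$ (equivalently, return the midpoint of each such arc with probability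 equal to its length). $M(\mathbf{x})=\mathrm{lrm}(\mathbf{x})$ if agents are on one semicircle and $M(\mathbf{x})=\mathrm{rc}(\mathbf{x})$ otherwise. *)

From Stdlib Require Import Reals Lra Lia List Sorting.Sorted Permutation.
Import ListNotations.
Open Scope R_scope.

(* The circle G of circumference 1 is R/Z; points are represented by reals,
   and everything below only depends on them modulo 1.  Agent profiles are
   taken with representatives in [0,1). *)

Definition ccw (a b : R) : R := frac_part (b - a).

Definition dist (x y : R) : R := Rmin (frac_part (x - y)) (1 - frac_part (x - y)).

Definition antip (x : R) : R := frac_part (x + /2).

Definition valid_profile (n : nat) (x : nat -> R) : Prop :=
  forall i, (i < n)%nat -> 0 <= x i < 1.

Definition deviate (x : nat -> R) (i : nat) (v : R) : nat -> R :=
  fun j => if Nat.eqb j i then v else x j.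

(* Finite-support distributions on G: lists of (probability, point). *)
Definition dist_G := list (R * R).

Definition expect (P : dist_G) (f : R -> R) : R :=
  fold_right (fun py acc => fst py * f (snd py) + acc) 0 P.

Definition cost (P : dist_G) (xi : R) : R := expect P (fun y => dist xi y).

Fixpoint maxdist (x : nat -> R) (k : nat) (y : R) : R :=
  match k with
  | O => 0
  | S k' => Rmax (maxdist x k' y) (dist y (x k'))
  end.

Definition mc_pt (n : nat) (x : nat -> R) (y : R) : R := maxdist x n y.

Definition mc (n : nat) (P : dist_G) (x : nat -> R) : R :=
  expect P (fun y => mc_pt n x y).

Definition in_arc (l L y : R) : Prop := ccw l y <= L.

Definition all_in_arc (n : nat) (x : nat -> R) (l L : R) : Prop :=
  forall i, (i < n)%nat -> in_arc l L (x i).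

Definition on_one_semicircle (n : nat) (x : nat -> R) : Prop :=
  exists c, all_in_arc n x c (/2).

Definition minimal_arc (n : nat) (x : nat -> R) (l r : R) : Prop :=
  (exists i, (i < n)%nat /\ x i = l) /\
  (exists j, (j < n)%nat /\ x j = r) /\
  all_in_arc n x l (ccw l r) /\
  (forall l' L', 0 <= L' -> all_in_arc n x l' L' -> ccw l r <= L').

(* P is an output of LRM at x (for some choice of minimal arc). *)
Definition lrm (n : nat) (x : nat -> R) (P : dist_G) : Prop :=
  exists l r, minimal_arc n x l r /\
    P = [(/4, l); (/4, r); (/2, l + ccw l r / 2)].

(* RC: given the sorted list s of antipodal points, the arcs between
   cyclically consecutive ones; output each arc midpoint with probability
   equal to the arc length. *)
Fixpoint rc_inner (s : list R) : dist_G :=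
  match s with
  | a :: ((b :: _) as t) => (b - a, (a + b) / 2) :: rc_inner t
  | _ => []
  end.

Definition rc_of_sorted (s : list R) : dist_G :=
  match s with
  | [] => []
  | a0 :: _ =>
      let z := last s a0 in
      rc_inner s ++ [(a0 + 1 - z, (z + a0 + 1) / 2)]
  end.

Definition rc (n : nat) (x : nat -> R) (P : dist_G) : Prop :=
  exists s, Permutation s (map (fun j => antip (x j)) (seq 0 n)) /\
            Sorted Rle s /\ P = rc_of_sorted s.

Definition M_out (n : nat) (x : nat -> R) (P : dist_G) : Prop :=
  (on_one_semicircle n x /\ lrm n x P) \/
  (~ on_one_semicircle n x /\ rc n x P).

(* Points of the circle are reals modulo 1 and d(x,y) = dZ (x - y), where
   dZ t is the distance from t to the nearest integer.
   - LRM.  All agents lie in the minimal arc [l, l+L] (L <= 1/2).  An agent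
     at offset p pays max(p, L - p)/2, half its distance to the farther
     endpoint; the endpoints serve everybody within L and the midpoint within
     L/2, while any facility is L/2 away from l or from r.
   - RC.  With Dprim the primitive of dZ, an arc [a,b] of length g <= 1/2
     obeys the midpoint rule  g * dZ(mid) = Dprim b - Dprim a + midpt_err,
     with an explicit square correction midpt_err.  Summing over the arcs
     (Dprim telescopes to 1/4) gives cost(rc, z) = 1/4 + sum of corrections;
     bounding the corrections yields  cost <= 1/4 - (1/2 - maxdist)^2  for an
     agent, and  cost >= 1/4 - (1/2 - d(z, x_j))^2  for any point z and agent j.
   - Strategyproofness.  Under every output of M a point pays at least half
     its distance to each agent; this beats LRM's truthful cost, and RC's
     truthful cost is beaten by the RC lower bound above or, if the deviation
     leads to LRM, by the fact that LRM's arc then contains the deviator's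
     antipode, costing it 1/4.
   The file develops dZ and the midpoint rule, finite maxima and sums over the
   cyclic arcs of a sorted list, then RC, LRM, existence of outputs, and finally
   assembles the theorem. *)

From Stdlib Require Import Reals Lra Lia List Permutation Classical.
From Stdlib Require Import Orders Sorting.Sorted Sorting.Mergesort.
(* Imported after Reals, whose metric-space [dist] would otherwise shadow ours. *)
Import ListNotations.
Open Scope R_scope.

Lemma frac_range x : 0 <= frac_part x < 1.
Proof. destruct (base_fp x); lra. Qed.

Lemma frac_decomp x : x = IZR (Int_part x) + frac_part x.
Proof. apply Rplus_Int_part_frac_part. Qed.

Lemma frac_spec x k :
  IZR k <= x < IZR k + 1 -> frac_part x = x - IZR k /\ Int_part x = k.
Proof.
  intros H.
  destruct (Int_part_frac_part_spec x k (x - IZR k)) as [H1 H2]; [lra | ring |].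
  split; auto.
Qed.

Lemma frac_shift x k :
  frac_part (x + IZR k) = frac_part x /\ Int_part (x + IZR k) = (Int_part x + k)%Z.
Proof.
  pose proof (frac_range x) as Hr. pose proof (frac_decomp x) as Hd.
  assert (H : IZR (Int_part x + k) <= x + IZR k < IZR (Int_part x + k) + 1)
    by (rewrite plus_IZR; lra).
  destruct (frac_spec _ _ H) as [A B]. split; auto.
  rewrite A, plus_IZR. lra.
Qed.

Lemma frac_id x : 0 <= x < 1 -> frac_part x = x.
Proof. intros H. rewrite (proj1 (frac_spec x 0 ltac:(simpl; lra))); simpl; lra. Qed.

Lemma frac_id1 x : 1 <= x < 2 -> frac_part x = x - 1.
Proof. intros H. apply (frac_spec x 1); simpl; lra. Qed.

Lemma frac_idm1 x : -1 <= x < 0 -> frac_part x = x + 1.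
Proof. intros H. rewrite (proj1 (frac_spec x (-1) ltac:(simpl; lra))); simpl; lra. Qed.

Definition dZ (t : R) : R := Rmin (frac_part t) (1 - frac_part t).

Lemma dist_dZ x y : dist x y = dZ (x - y).
Proof. reflexivity. Qed.

Lemma IZR_small_0 m : Rabs (IZR m) < 1 -> m = 0%Z.
Proof.
  intros H. destruct (Z.lt_trichotomy m 0) as [h|[h|h]]; auto.
  - assert (IZR m <= -1) by (change (-1) with (IZR (-1)); apply IZR_le; lia).
    rewrite Rabs_left in H; lra.
  - assert (IZR m >= 1) by (change 1 with (IZR 1); apply IZR_ge; lia).
    rewrite Rabs_right in H; lra.
Qed.

Lemma dZ_le t k : dZ t <= Rabs (t - IZR k).
Proof.
  unfold dZ. pose proof (frac_range t) as Hr. pose proof (frac_decomp t) as Hd.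
  set (f := frac_part t) in *. set (m := (Int_part t - k)%Z).
  assert (Hm : t - IZR k = f + IZR m) by (unfold m; rewrite minus_IZR; lra).
  rewrite Hm.
  destruct (Z.lt_trichotomy m 0) as [h|[h|h]].
  - assert (IZR m <= -1) by (change (-1) with (IZR (-1)); apply IZR_le; lia).
    rewrite Rabs_left by lra. apply Rle_trans with (1 - f); [apply Rmin_r | lra].
  - rewrite h. simpl. rewrite Rplus_0_r, Rabs_right by lra. apply Rmin_l.
  - assert (IZR m >= 1) by (change 1 with (IZR 1); apply IZR_ge; lia).
    rewrite Rabs_right by lra. apply Rle_trans with (1 - f); [apply Rmin_r | lra].
Qed.

Lemma dZ_attained t : exists k, dZ t = Rabs (t - IZR k).
Proof.
  unfold dZ. pose proof (frac_range t) as Hr. pose proof (frac_decomp t) as Hd.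
  destruct (Rle_dec (frac_part t) (1 - frac_part t)).
  - exists (Int_part t). rewrite Rmin_left by lra. rewrite Rabs_right; lra.
  - exists (Int_part t + 1)%Z. rewrite Rmin_right by lra. rewrite plus_IZR.
    rewrite Rabs_left; lra.
Qed.

Lemma dZ_ge t c : (forall k, c <= Rabs (t - IZR k)) -> c <= dZ t.
Proof. intros H. destruct (dZ_attained t) as [k Hk]. rewrite Hk. apply H. Qed.

Lemma dZ_range t : 0 <= dZ t <= 1/2.
Proof. unfold dZ. pose proof (frac_range t). unfold Rmin; destruct Rle_dec; lra. Qed.

Lemma dZ_exact t k : Rabs (t - IZR k) <= 1/2 -> dZ t = Rabs (t - IZR k).
Proof.
  intros H. destruct (dZ_attained t) as [k' Hk']. pose proof (dZ_le t k).
  destruct (Req_dec (Rabs (t - IZR k')) (Rabs (t - IZR k))) as [e|ne]; [lra|].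
  assert (Hs : Rabs (IZR (k - k')) < 1).
  { rewrite minus_IZR.
    replace (IZR k - IZR k') with ((t - IZR k') - (t - IZR k)) by ring.
    eapply Rle_lt_trans; [apply Rabs_triang|]. rewrite Rabs_Ropp. lra. }
  apply IZR_small_0 in Hs. assert (k = k') by lia. subst. lra.
Qed.

Lemma dZ_small t : Rabs t <= 1/2 -> dZ t = Rabs t.
Proof. intros H. rewrite (dZ_exact t 0); simpl; rewrite Rminus_0_r; auto. Qed.

Lemma dZ_per t k : dZ (t + IZR k) = dZ t.
Proof.
  apply Rle_antisym.
  - destruct (dZ_attained t) as [k' Hk']. rewrite Hk'.
    replace (t - IZR k') with (t + IZR k - IZR (k' + k)) by (rewrite plus_IZR; ring).
    apply dZ_le.
  - destruct (dZ_attained (t + IZR k)) as [k' Hk']. rewrite Hk'.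
    replace (t + IZR k - IZR k') with (t - IZR (k' - k)) by (rewrite minus_IZR; ring).
    apply dZ_le.
Qed.

Lemma dZ_opp t : dZ (- t) = dZ t.
Proof.
  assert (H : forall u, dZ (- u) <= dZ u).
  { intros u. destruct (dZ_attained u) as [k Hk]. rewrite Hk.
    replace (Rabs (u - IZR k)) with (Rabs (- u - IZR (- k)))
      by (rewrite opp_IZR, <- Rabs_Ropp; f_equal; ring).
    apply dZ_le. }
  apply Rle_antisym; [apply H|]. rewrite <- (Ropp_involutive t) at 1. apply H.
Qed.

Lemma dZ_triangle a b : dZ (a + b) <= dZ a + dZ b.
Proof.
  destruct (dZ_attained a) as [ka Ha]. destruct (dZ_attained b) as [kb Hb].
  eapply Rle_trans; [apply (dZ_le _ (ka + kb))|]. rewrite Ha, Hb, plus_IZR.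
  replace (a + b - (IZR ka + IZR kb)) with ((a - IZR ka) + (b - IZR kb)) by ring.
  apply Rabs_triang.
Qed.

(* Shifting by a half turn exchanges nearest integers and nearest half-integers. *)
Lemma dZ_half t : dZ (t - 1/2) = 1/2 - dZ t.
Proof.
  destruct (dZ_attained t) as [k Hk]. pose proof (dZ_range t). pose proof (dZ_le t k).
  destruct (Rle_dec 0 (t - IZR k)).
  - rewrite Rabs_right in Hk by lra.
    rewrite (dZ_exact _ k); rewrite Rabs_left1; lra.
  - rewrite Rabs_left in Hk by lra.
    rewrite (dZ_exact _ (k - 1)); rewrite minus_IZR, Rabs_right; simpl; lra.
Qed.

Lemma dist_sym x y : dist x y = dist y x.
Proof.
  rewrite !dist_dZ. replace (y - x) with (- (x - y)) by ring. now rewrite dZ_opp.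
Qed.

Lemma dist_triangle x y z : dist x z <= dist x y + dist y z.
Proof.
  rewrite !dist_dZ. replace (x - z) with ((x - y) + (y - z)) by ring. apply dZ_triangle.
Qed.

Lemma dist_range x y : 0 <= dist x y <= 1/2.
Proof. apply dZ_range. Qed.

Lemma dist_refl x : dist x x = 0.
Proof.
  rewrite dist_dZ. replace (x - x) with 0 by ring.
  rewrite dZ_small; rewrite Rabs_R0; lra.
Qed.

Lemma dist_shift x y k : dist x (y + IZR k) = dist x y.
Proof.
  rewrite !dist_dZ.
  replace (x - (y + IZR k)) with ((x - y) + IZR (- k)) by (rewrite opp_IZR; ring).
  apply dZ_per.
Qed.

Lemma dist_plus1 v y : dist (v + 1) y = dist v y.
Proof. rewrite dist_sym, (dist_sym v). apply (dist_shift y v 1). Qed.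

Lemma dist_frac_l x y : dist (frac_part x) y = dist x y.
Proof.
  rewrite dist_sym, (dist_sym x). rewrite (frac_decomp x) at 2.
  rewrite Rplus_comm, dist_shift. auto.
Qed.

Lemma dist_antip z u : dist z (antip u) = 1/2 - dist z u.
Proof.
  rewrite dist_sym. unfold antip. rewrite dist_frac_l, dist_sym, !dist_dZ.
  replace (z - (u + /2)) with ((z - u) - 1/2) by field. apply dZ_half.
Qed.

Lemma antip_range u : 0 <= antip u < 1.
Proof. apply frac_range. Qed.

Lemma ccw_range l u : 0 <= ccw l u < 1.
Proof. apply frac_range. Qed.

Lemma ccw_self l : ccw l l = 0.
Proof. unfold ccw. replace (l - l) with 0 by ring. apply fp_R0. Qed.

Lemma ccw_rebase l c u : ccw c u = frac_part (ccw l u - ccw l c).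
Proof.
  unfold ccw. pose proof (frac_decomp (u - l)). pose proof (frac_decomp (c - l)).
  replace (u - c) with ((frac_part (u - l) - frac_part (c - l))
                        + IZR (Int_part (u - l) - Int_part (c - l))).
  - apply frac_shift.
  - rewrite minus_IZR. lra.
Qed.

Lemma dist_ccw l u v : dist u v = dZ (ccw l u - ccw l v).
Proof.
  unfold ccw. rewrite dist_dZ.
  replace (u - v) with ((frac_part (u - l) - frac_part (v - l))
                        + IZR (Int_part (u - l) - Int_part (v - l))).
  - apply dZ_per.
  - rewrite minus_IZR. pose proof (frac_decomp (u - l)). pose proof (frac_decomp (v - l)). lra.
Qed.

Lemma dist_offset l t u : dist (l + t) u = dZ (t - ccw l u).
Proof.
  rewrite dist_dZ. unfold ccw. pose proof (frac_decomp (u - l)).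
  replace (l + t - u) with ((t - frac_part (u - l)) + IZR (- Int_part (u - l))).
  - apply dZ_per.
  - rewrite opp_IZR. lra.
Qed.

(** * The midpoint rule for dZ *)

(* Dprim is the primitive of dZ vanishing at 0: on [0,1] dZ is the tent
   u |-> min(u, 1-u), whose integral over [0,u] is Dprim_unit u, and each
   period contributes 1/4. *)
Definition Dprim_unit (u : R) : R :=
  if Rle_dec u (1/2) then u * u / 2 else 1/4 - (1 - u) * (1 - u) / 2.
Definition Dprim (t : R) : R := IZR (Int_part t) / 4 + Dprim_unit (frac_part t).

(* The error of the midpoint rule on an arc of length g whose midpoint is at
   distance d from Z: positive when the arc contains a half-integer
   (d > (1-g)/2), negative when it contains an integer (d < g/2). *)
Definition midpt_err (g d : R) : R :=
  Rsqr (Rmax 0 (d - (1 - g) / 2)) - Rsqr (Rmax 0 (g / 2 - d)).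

Lemma Dprim_shift t k : Dprim (t + IZR k) = Dprim t + IZR k / 4.
Proof. unfold Dprim. destruct (frac_shift t k) as [A B]. rewrite A, B, plus_IZR. lra. Qed.

Lemma midpoint_rule_unit t1 t2 : 0 <= t1 < 1 -> t1 <= t2 <= t1 + 1/2 ->
  (t2 - t1) * dZ ((t1 + t2) / 2)
  = Dprim t2 - Dprim t1 + midpt_err (t2 - t1) (dZ ((t1 + t2) / 2)).
Proof.
  intros H1 H2.
  assert (P1 : Dprim t1 = Dprim_unit t1).
  { unfold Dprim. destruct (frac_spec t1 0) as [A B]; [simpl; lra|].
    rewrite A, B. simpl. rewrite Rminus_0_r. lra. }
  assert (P2 : (t2 < 1 /\ Dprim t2 = Dprim_unit t2)
               \/ (1 <= t2 /\ Dprim t2 = 1/4 + Dprim_unit (t2 - 1))).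
  { unfold Dprim. destruct (Rlt_dec t2 1).
    - left. destruct (frac_spec t2 0) as [A B]; [simpl; lra|].
      rewrite A, B. simpl. rewrite Rminus_0_r. lra.
    - right. destruct (frac_spec t2 1) as [A B]; [simpl; lra|].
      rewrite A, B. simpl. lra. }
  assert (P3 : ((t1 + t2) / 2 <= 1/2 /\ dZ ((t1 + t2) / 2) = (t1 + t2) / 2)
               \/ (1/2 <= (t1 + t2) / 2 /\ dZ ((t1 + t2) / 2) = Rabs ((t1 + t2) / 2 - 1))).
  { destruct (Rle_dec ((t1 + t2) / 2) (1/2)).
    - left. split; [lra|]. rewrite dZ_small; rewrite Rabs_right; lra.
    - right. split; [lra|]. rewrite (dZ_exact _ 1); simpl; auto.
      unfold Rabs; destruct Rcase_abs; lra. }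
  rewrite P1.
  destruct P2 as [[Q2 P2]|[Q2 P2]]; rewrite P2; destruct P3 as [[Q3 P3]|[Q3 P3]]; rewrite P3;
  unfold Dprim_unit, midpt_err, Rsqr, Rmax, Rabs;
  repeat match goal with |- context [Rle_dec ?a ?b] => destruct (Rle_dec a b) end;
  repeat match goal with |- context [Rcase_abs ?a] => destruct (Rcase_abs a) end;
  try lra; nra.
Qed.

Lemma midpoint_rule t1 t2 : t1 <= t2 <= t1 + 1/2 ->
  (t2 - t1) * dZ ((t1 + t2) / 2)
  = Dprim t2 - Dprim t1 + midpt_err (t2 - t1) (dZ ((t1 + t2) / 2)).
Proof.
  intros H. set (k := Int_part t1). set (f := frac_part t1).
  pose proof (frac_decomp t1) as Hd. pose proof (frac_range t1) as Hr. fold k f in Hd, Hr.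
  set (u2 := t2 - IZR k).
  assert (E1 : t1 = f + IZR k) by lra. assert (E2 : t2 = u2 + IZR k) by (unfold u2; lra).
  assert (E3 : (t1 + t2) / 2 = (f + u2) / 2 + IZR k) by lra.
  rewrite E3, dZ_per, E1, E2, !Dprim_shift.
  replace (u2 + IZR k - (f + IZR k)) with (u2 - f) by ring.
  rewrite (midpoint_rule_unit f u2); [ring | lra | unfold u2; lra].
Qed.

Lemma midpoint_rule_at a b z : a <= b <= a + 1/2 ->
  (b - a) * dist z ((a + b) / 2)
  = Dprim (b - z) - Dprim (a - z) + midpt_err (b - a) (dist z ((a + b) / 2)).
Proof.
  intros H. rewrite dist_dZ.
  replace (z - (a + b) / 2) with (- (((a - z) + (b - z)) / 2)) by field. rewrite dZ_opp.
  replace (b - a) with ((b - z) - (a - z)) by ring. apply midpoint_rule. lra.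
Qed.

Lemma midpt_err_bounds g d :
  - Rsqr (Rmax 0 (g / 2 - d)) <= midpt_err g d <= Rsqr (Rmax 0 (d - (1 - g) / 2)).
Proof.
  unfold midpt_err. pose proof (Rle_0_sqr (Rmax 0 (g / 2 - d))).
  pose proof (Rle_0_sqr (Rmax 0 (d - (1 - g) / 2))). lra.
Qed.

Lemma sqr_le r M : 0 <= r <= M -> Rsqr r <= Rsqr M.
Proof. intros H. unfold Rsqr. nra. Qed.

Fixpoint maxf (g : nat -> R) (m : nat) : R :=
  match m with O => 0 | S m' => Rmax (maxf g m') (g m') end.

Lemma maxf_ge g m j : (j < m)%nat -> g j <= maxf g m.
Proof.
  induction m; intros H; [lia|]. simpl.
  destruct (Nat.eq_dec j m) as [->|]; [apply Rmax_r|].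
  eapply Rle_trans; [apply IHm; lia | apply Rmax_l].
Qed.

Lemma maxf_le g m B : 0 <= B -> (forall j, (j < m)%nat -> g j <= B) -> maxf g m <= B.
Proof.
  intros HB; induction m; intros H; simpl; [lra|].
  apply Rmax_lub; [apply IHm; intros; apply H | apply H]; lia.
Qed.

Lemma maxf_attained g m : (1 <= m)%nat -> (forall j, 0 <= g j) ->
  exists j, (j < m)%nat /\ maxf g m = g j.
Proof.
  intros Hm Hg. induction m; [lia|]. simpl.
  destruct (Nat.eq_dec m 0) as [->|].
  - exists 0%nat. split; [lia|]. simpl. apply Rmax_right, Hg.
  - destruct IHm as [j [Hj E]]; [lia|].
    destruct (Rle_dec (maxf g m) (g m)).
    + exists m. split; [lia|]. apply Rmax_right; auto.
    + exists j. split; [lia|]. rewrite Rmax_left by lra. auto.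
Qed.

Lemma maxdist_maxf x k y : maxdist x k y = maxf (fun j => dist y (x j)) k.
Proof. induction k; simpl; congruence. Qed.

Lemma maxdist_ge x k y j : (j < k)%nat -> dist y (x j) <= maxdist x k y.
Proof. rewrite maxdist_maxf. apply (maxf_ge (fun j => dist y (x j))). Qed.

Lemma maxdist_le x k y B :
  0 <= B -> (forall j, (j < k)%nat -> dist y (x j) <= B) -> maxdist x k y <= B.
Proof. rewrite maxdist_maxf. apply maxf_le. Qed.

Lemma maxdist_attained x k y : (1 <= k)%nat ->
  exists j, (j < k)%nat /\ maxdist x k y = dist y (x j).
Proof.
  intros Hk. rewrite maxdist_maxf. apply maxf_attained; auto. intros; apply dist_range.
Qed.

Lemma maxdist_ext x k y y' : (forall j, dist y (x j) = dist y' (x j)) ->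
  maxdist x k y = maxdist x k y'.
Proof. intros H. rewrite !maxdist_maxf. induction k; simpl; congruence. Qed.

Lemma argmin_nat (f : nat -> R) n : (1 <= n)%nat ->
  exists k, (k < n)%nat /\ forall j, (j < n)%nat -> f k <= f j.
Proof.
  induction n; intros H; [lia|].
  destruct (Nat.eq_dec n 0) as [->|].
  - exists 0%nat. split; [lia|]. intros j Hj. replace j with 0%nat by lia. lra.
  - destruct IHn as [k [Hk Hm]]; [lia|].
    destruct (Rle_dec (f k) (f n)).
    + exists k. split; [lia|]. intros j Hj.
      destruct (Nat.eq_dec j n) as [->|]; [auto | apply Hm; lia].
    + exists n. split; [lia|]. intros j Hj.
      destruct (Nat.eq_dec j n) as [->|]; [lra|]. specialize (Hm j ltac:(lia)). lra.
Qed.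

Lemma expect_app P Q f : expect (P ++ Q) f = expect P f + expect Q f.
Proof. induction P as [|[p y] P IH]; simpl; [lra|]. rewrite IH. ring. Qed.

Lemma expect3 p1 a p2 b p3 c f :
  expect [(p1, a); (p2, b); (p3, c)] f = p1 * f a + p2 * f b + p3 * f c.
Proof. unfold expect; simpl. ring. Qed.

Definition sumA (A : list (R * R)) (F : R -> R -> R) : R :=
  fold_right (fun ab acc => F (fst ab) (snd ab) + acc) 0 A.

Lemma sumA_app A B F : sumA (A ++ B) F = sumA A F + sumA B F.
Proof. induction A as [|[a b] A IH]; simpl; [lra|]. rewrite IH. ring. Qed.

Lemma sumA_le A F G : (forall a b, In (a, b) A -> F a b <= G a b) -> sumA A F <= sumA A G.
Proof.
  induction A as [|[a b] A IH]; intros H; simpl; [lra|].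
  apply Rplus_le_compat; [apply H; left | apply IH; intros; apply H; right]; auto.
Qed.

Lemma sumA_ext A F G : (forall a b, In (a, b) A -> F a b = G a b) -> sumA A F = sumA A G.
Proof.
  intros H. apply Rle_antisym; apply sumA_le; intros a b Hab; rewrite H; auto; lra.
Qed.

Lemma sumA_plus A F G : sumA A (fun a b => F a b + G a b) = sumA A F + sumA A G.
Proof. induction A as [|[a b] A IH]; simpl; [lra|]. rewrite IH. ring. Qed.

Lemma sumA_scale A c F : sumA A (fun a b => c * F a b) = c * sumA A F.
Proof. induction A as [|[a b] A IH]; simpl; [lra|]. rewrite IH. ring. Qed.

Lemma sumA_nonneg A F : (forall a b, In (a, b) A -> 0 <= F a b) -> 0 <= sumA A F.
Proof.
  induction A as [|[a b] A IH]; intros H; simpl; [lra|].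
  pose proof (H a b (or_introl eq_refl)). assert (0 <= sumA A F) by (apply IH; auto with datatypes).
  lra.
Qed.

Lemma sumA_ge_term A F a0 b0 : In (a0, b0) A -> (forall a b, In (a, b) A -> 0 <= F a b) ->
  F a0 b0 <= sumA A F.
Proof.
  intros Hin H. induction A as [|[a b] A IH]; [destruct Hin|]. simpl.
  assert (Hrest : 0 <= sumA A F) by (apply sumA_nonneg; auto with datatypes).
  destruct Hin as [e|Hin].
  - inversion e; subst. lra.
  - pose proof (H a b (or_introl eq_refl)).
    specialize (IH Hin (fun a b h => H a b (or_intror h))). simpl. lra.
Qed.

Lemma sumA_le_term A F a0 b0 : In (a0, b0) A -> (forall a b, In (a, b) A -> F a b <= 0) ->
  sumA A F <= F a0 b0.
Proof.
  intros Hin H.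
  pose proof (sumA_ge_term A (fun a b => -1 * F a b) a0 b0 Hin) as Hge.
  rewrite sumA_scale in Hge. cut (-1 * F a0 b0 <= -1 * sumA A F); [lra|].
  apply Hge. intros a b Hab. specialize (H a b Hab). lra.
Qed.

(** * The cyclic arcs of a sorted list of points of [0,1) *)

(* Consecutive pairs of s, and the arcs between cyclically consecutive
   points (the last arc wraps around through 1). *)
Fixpoint inner_arcs (s : list R) : list (R * R) :=
  match s with
  | a :: ((b :: _) as t) => (a, b) :: inner_arcs t
  | _ => []
  end.

Definition arcs (s : list R) : list (R * R) :=
  match s with [] => [] | a0 :: _ => inner_arcs s ++ [(last s a0, a0 + 1)] end.

Lemma expect_rc s f :
  expect (rc_of_sorted s) f = sumA (arcs s) (fun a b => (b - a) * f ((a + b) / 2)).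
Proof.
  assert (Hin : forall t, expect (rc_inner t) f
                          = sumA (inner_arcs t) (fun a b => (b - a) * f ((a + b) / 2))).
  { induction t as [|a [|b t'] IH]; auto. simpl in *. rewrite IH. reflexivity. }
  destruct s as [|a0 t]; [reflexivity|]. unfold rc_of_sorted, arcs.
  rewrite expect_app, sumA_app, Hin. f_equal.
  unfold expect, sumA; simpl. rewrite !Rplus_assoc. reflexivity.
Qed.

Lemma last_In (l : list R) d : l <> [] -> In (last l d) l.
Proof.
  induction l as [|x [|y t'] IH]; intros H; [congruence | simpl; auto |].
  right. apply IH. discriminate.
Qed.

Lemma sorted_le_last (l : list R) d : StronglySorted Rle l -> forall u, In u l -> u <= last l d.
Proof.
  induction l as [|x t IH]; intros H u Hu; [destruct Hu|].
  inversion H as [|? ? Ht Hx]; subst. rewrite Forall_forall in Hx.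
  destruct t as [|y t'].
  - destruct Hu as [e|[]]; subst; simpl; lra.
  - change (last (x :: y :: t') d) with (last (y :: t') d).
    destruct Hu as [e|Hu].
    + subst. apply Hx, last_In. discriminate.
    + apply IH; auto.
Qed.

Lemma sorted_head_le (x : R) t : StronglySorted Rle (x :: t) -> forall u, In u (x :: t) -> x <= u.
Proof.
  intros H u Hu. inversion H as [|? ? _ Hx]; subst. rewrite Forall_forall in Hx.
  destruct Hu as [e|Hu]; [subst; lra | apply Hx; auto].
Qed.

Lemma inner_arcs_props s : StronglySorted Rle s -> forall a b, In (a, b) (inner_arcs s) ->
  In a s /\ In b s /\ a <= b /\ (forall u, In u s -> u <= a \/ b <= u).
Proof.
  induction s as [|x t IH]; intros H a b Hin; [destruct Hin|].
  destruct t as [|y t']; [destruct Hin|].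
  inversion H as [|? ? Ht Hx]; subst. rewrite Forall_forall in Hx.
  simpl in Hin. destruct Hin as [e|Hin].
  - inversion e; subst.
    split; [left; auto|]. split; [right; left; auto|]. split; [apply Hx; left; auto|].
    intros u [Hu|Hu]; [left; subst; lra|]. right. eapply sorted_head_le; eauto.
  - destruct (IH Ht a b Hin) as [A [B [C Dd]]].
    split; [right; auto|]. split; [right; auto|]. split; auto.
    intros u [Hu|Hu]; [|apply Dd; auto]. subst. left. apply Hx; auto.
Qed.

Lemma inner_arcs_telescope (Phi : R -> R) s d : s <> [] ->
  sumA (inner_arcs s) (fun a b => Phi b - Phi a) = Phi (last s d) - Phi (hd d s).
Proof.
  induction s as [|x [|y t'] IH]; intros H; [congruence | simpl; ring |].
  simpl in IH |- *. rewrite IH by discriminate. destruct t'; simpl; ring.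
Qed.

Lemma arcs_telescope (Phi : R -> R) c a0 t :
  (forall u, Phi (u + 1) = Phi u + c) ->
  sumA (arcs (a0 :: t)) (fun a b => Phi b - Phi a) = c.
Proof.
  intros Hp. unfold arcs. rewrite sumA_app, (inner_arcs_telescope Phi _ a0) by discriminate.
  simpl. rewrite Hp. ring.
Qed.

Lemma inner_arcs_cover l w d : StronglySorted Rle l -> l <> [] -> hd d l <= w <= last l d ->
  (exists a b, In (a, b) (inner_arcs l) /\ a <= w <= b) \/ (forall u, In u l -> u = w).
Proof.
  induction l as [|x l' IH]; intros H Hn Hw; [congruence|].
  destruct l' as [|y t']; simpl in Hw.
  - right. intros u [e|[]]; subst; lra.
  - inversion H as [|? ? Ht Hx]; subst. rewrite Forall_forall in Hx.
    assert (x <= y) by (apply Hx; left; auto).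
    destruct (Rle_dec w y).
    + left. exists x, y. split; [left; auto | lra].
    + destruct (IH Ht ltac:(discriminate)) as [[a [b [Hab Hw']]]|Hall].
      * simpl. split; [lra|]. destruct t'; simpl in *; lra.
      * left. exists a, b. split; [right | ]; auto.
      * exfalso. specialize (Hall y (or_introl eq_refl)). lra.
Qed.

Lemma inner_arcs_sum_single l w F M : 0 <= M -> StronglySorted Rle l ->
  (forall a b, In (a, b) (inner_arcs l) -> 0 <= F a b <= M) ->
  (forall a b, In (a, b) (inner_arcs l) -> ~ (a < w < b) -> F a b = 0) ->
  sumA (inner_arcs l) F <= M /\
  ((forall u, In u l -> w <= u) \/ (forall u, In u l -> u <= w) -> sumA (inner_arcs l) F = 0).
Proof.
  intros HM. induction l as [|x [|y t'] IH]; intros H HF HZ; [simpl; auto | simpl; auto |].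
  inversion H as [|? ? Ht Hx]; subst. rewrite Forall_forall in Hx.
  assert (Hxy : x <= y) by (apply Hx; left; auto).
  destruct (IH Ht) as [I1 I2].
  { intros; apply HF; right; auto. }
  { intros; apply HZ; [right|]; auto. }
  change (sumA (inner_arcs (x :: y :: t')) F) with (F x y + sumA (inner_arcs (y :: t')) F).
  pose proof (HF x y (or_introl eq_refl)) as Fxy.
  split.
  - destruct (Rlt_dec x w); [destruct (Rlt_dec w y)|].
    + rewrite I2; [lra|]. left. intros u Hu. pose proof (sorted_head_le y t' Ht u Hu). lra.
    + rewrite (HZ x y (or_introl eq_refl)) by lra. lra.
    + rewrite (HZ x y (or_introl eq_refl)) by lra. lra.
  - intros [Hall|Hall].
    + pose proof (Hall x (or_introl eq_refl)).
      rewrite (HZ x y (or_introl eq_refl)) by lra. rewrite I2; [lra|].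
      left. intros; apply Hall; right; auto.
    + pose proof (Hall y (or_intror (or_introl eq_refl))).
      rewrite (HZ x y (or_introl eq_refl)) by lra. rewrite I2; [lra|].
      right. intros; apply Hall; right; auto.
Qed.

Section CyclicArcs.
Variable a0 : R.
Variable t : list R.
Hypothesis Hs : StronglySorted Rle (a0 :: t).
Hypothesis Hr : forall u, In u (a0 :: t) -> 0 <= u < 1.

Let s := a0 :: t.
Let z := last s a0.

Lemma last_props : In z s /\ (forall u, In u s -> a0 <= u <= z).
Proof.
  split; [apply last_In; discriminate|].
  intros u Hu. split; [apply sorted_head_le with t | apply sorted_le_last]; auto.
Qed.

Lemma arcs_cases a b : In (a, b) (arcs s) ->
  (In (a, b) (inner_arcs s) /\ b < 1) \/ (a = z /\ b = a0 + 1).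
Proof.
  unfold arcs, s. intros H. apply in_app_or in H. destruct H as [H|[H|[]]].
  - left. split; auto. destruct (inner_arcs_props _ Hs a b H) as [_ [B _]]. apply Hr in B. lra.
  - right. inversion H. auto.
Qed.

Lemma arc_bounds a b : In (a, b) (arcs s) -> 0 <= a < 1 /\ a <= b <= a + 1.
Proof.
  intros H. destruct last_props as [Z1 Z3].
  destruct (arcs_cases a b H) as [[H1 H2]|[H1 H2]].
  - destruct (inner_arcs_props _ Hs a b H1) as [A [B [C _]]]. apply Hr in A. apply Hr in B. lra.
  - subst. pose proof (Z3 _ Z1). apply Hr in Z1. pose proof (Hr a0 (or_introl eq_refl)). lra.
Qed.

Lemma arc_endpoints a b : In (a, b) (arcs s) -> In a s /\ (In b s \/ In (b - 1) s).
Proof.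
  intros H. destruct last_props as [Z1 _].
  destruct (arcs_cases a b H) as [[H1 H2]|[H1 H2]].
  - destruct (inner_arcs_props _ Hs a b H1) as [A [B _]]. auto.
  - subst. split; auto. right. replace (a0 + 1 - 1) with a0 by ring. left; auto.
Qed.

Lemma arc_empty_inside a b u : In (a, b) (arcs s) -> In u s ->
  ~ (a < u < b) /\ ~ (a < u + 1 < b).
Proof.
  intros H Hu. destruct last_props as [_ Z3]. pose proof (Hr u Hu).
  destruct (arcs_cases a b H) as [[H1 H2]|[H1 H2]].
  - destruct (inner_arcs_props _ Hs a b H1) as [_ [_ [_ Dd]]]. destruct (Dd u Hu); split; lra.
  - subst. pose proof (Z3 u Hu). split; lra.
Qed.

Lemma arcs_cover w : 0 <= w < 1 ->
  exists a b, In (a, b) (arcs s) /\ ((a <= w <= b) \/ (a <= w + 1 <= b)).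
Proof.
  intros Hw. destruct last_props as [Z1 Z3]. pose proof (Hr z Z1). pose proof (Hr a0 (or_introl eq_refl)).
  assert (Hwr : In (z, a0 + 1) (arcs s)) by (unfold arcs, s; apply in_or_app; right; left; auto).
  destruct (Rlt_dec w a0); [exists z, (a0 + 1); split; auto; right; lra|].
  destruct (Rle_dec z w); [exists z, (a0 + 1); split; auto; left; lra|].
  destruct (inner_arcs_cover s w a0 Hs ltac:(discriminate)) as [[a [b [Hab Hw']]]|Hall].
  - change (hd a0 s) with a0. fold z. lra.
  - exists a, b. split; [unfold arcs, s; apply in_or_app; left; auto | left; auto].
  - exfalso. specialize (Hall z Z1). lra.
Qed.

Lemma arcs_sum_single w F M : 0 <= w < 1 -> 0 <= M ->
  (forall a b, In (a, b) (arcs s) -> 0 <= F a b <= M) ->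
  (forall a b, In (a, b) (arcs s) -> ~ (a < w < b) -> ~ (a < w + 1 < b) -> F a b = 0) ->
  sumA (arcs s) F <= M.
Proof.
  intros Hw HM HF HZ. destruct last_props as [Z1 Z3].
  assert (Hwr : In (z, a0 + 1) (arcs s)) by (unfold arcs, s; apply in_or_app; right; left; auto).
  assert (Hin : forall a b, In (a, b) (inner_arcs s) -> In (a, b) (arcs s))
    by (intros; unfold arcs, s; apply in_or_app; left; auto).
  destruct (inner_arcs_sum_single s w F M HM Hs) as [I1 I2].
  - intros; apply HF; auto.
  - intros a b Hab Hn. apply HZ; auto.
    destruct (inner_arcs_props _ Hs a b Hab) as [_ [B _]]. apply Hr in B. lra.
  - replace (arcs s) with (inner_arcs s ++ [(z, a0 + 1)]) by reflexivity. rewrite sumA_app.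
    replace (sumA [(z, a0 + 1)] F) with (F z (a0 + 1)) by (unfold sumA; simpl; ring).
    pose proof (HF z (a0 + 1) Hwr).
    destruct (Rlt_dec z w); [|destruct (Rlt_dec w a0)].
    + rewrite I2; [lra|]. right. intros u Hu. pose proof (Z3 u Hu). lra.
    + rewrite I2; [lra|]. left. intros u Hu. pose proof (Z3 u Hu). lra.
    + rewrite (HZ z (a0 + 1) Hwr) by lra. lra.
Qed.
End CyclicArcs.

Lemma arc_far a b w : 0 <= a < 1 -> a <= b <= a + 1/2 -> 0 <= w < 1 ->
  ~ (a < w < b) -> ~ (a < w + 1 < b) -> (b - a) / 2 <= dist w ((a + b) / 2).
Proof.
  intros Ha Hb Hw N1 N2. rewrite dist_dZ. apply dZ_ge. intros k.
  destruct (Z.lt_trichotomy k (-1)) as [h|[->|h]].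
  - assert (IZR k <= -2) by (change (-2) with (IZR (-2)); apply IZR_le; lia).
    rewrite Rabs_right; lra.
  - simpl. unfold Rabs; destruct Rcase_abs; lra.
  - destruct (Z.eq_dec k 0) as [->|].
    + simpl. unfold Rabs; destruct Rcase_abs; lra.
    + assert (IZR k >= 1) by (change 1 with (IZR 1); apply IZR_ge; lia).
      rewrite Rabs_left; lra.
Qed.

Lemma arc_inside_dists a b v : a <= v <= b -> b <= a + 1/2 ->
  dist v a = v - a /\ dist v b = b - v /\ dist v ((a + b) / 2) = Rabs (v - (a + b) / 2).
Proof.
  intros H1 H2. rewrite !dist_dZ. split; [|split].
  - rewrite dZ_small; rewrite Rabs_right; lra.
  - rewrite dZ_small; rewrite Rabs_left1; lra.
  - rewrite dZ_small; auto. unfold Rabs; destruct Rcase_abs; lra.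
Qed.

Lemma arcs_cover_rep a0 t w :
  StronglySorted Rle (a0 :: t) -> (forall u, In u (a0 :: t) -> 0 <= u < 1) -> 0 <= w < 1 ->
  exists a b v, In (a, b) (arcs (a0 :: t)) /\ a <= v <= b /\ forall y, dist v y = dist w y.
Proof.
  intros Hs Hr Hw. destruct (arcs_cover a0 t Hs Hr w Hw) as [a [b [Hab [Hv|Hv]]]].
  - exists a, b, w. auto.
  - exists a, b, (w + 1). split; [|split]; auto. intros; apply dist_plus1.
Qed.

(* The cost of RC: by the midpoint rule, the integral of dZ over a full turn
   (1/4) plus the midpoint errors of the arcs. *)
Lemma rc_cost_formula a0 t z : StronglySorted Rle (a0 :: t) ->
  (forall a b, In (a, b) (arcs (a0 :: t)) -> a <= b <= a + 1/2) ->
  cost (rc_of_sorted (a0 :: t)) z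
  = 1/4 + sumA (arcs (a0 :: t)) (fun a b => midpt_err (b - a) (dist z ((a + b) / 2))).
Proof.
  intros Hs Hg. unfold cost. rewrite expect_rc.
  rewrite (sumA_ext _ _ (fun a b => (Dprim (b - z) - Dprim (a - z))
                                     + midpt_err (b - a) (dist z ((a + b) / 2)))).
  2: { intros a b Hab. apply midpoint_rule_at; auto. }
  rewrite sumA_plus. f_equal.
  apply (arcs_telescope (fun u => Dprim (u - z))). intros u.
  replace (u + 1 - z) with ((u - z) + IZR 1) by (simpl; ring). rewrite Dprim_shift. simpl. lra.
Qed.

(** * Analysis of RC *)

Section RC.
Variable n : nat.
Variable x : nat -> R.
Variable a0 : R.
Variable t : list R.
Hypothesis Hval : valid_profile n x.
Hypothesis Hperm : Permutation (a0 :: t) (map (fun j => antip (x j)) (seq 0 n)).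
Hypothesis Hsort : Sorted Rle (a0 :: t).

(* s is the sorted list of the antipodes of the agents. *)
Let s := a0 :: t.

Lemma RC_sorted : StronglySorted Rle s.
Proof. apply Sorted_StronglySorted; auto. intros a b c; apply Rle_trans. Qed.

Lemma RC_mem u : In u s <-> exists j, (j < n)%nat /\ u = antip (x j).
Proof.
  split.
  - intros H. apply (Permutation_in _ Hperm), in_map_iff in H.
    destruct H as [j [e Hj]]. apply in_seq in Hj. exists j. split; [lia | auto].
  - intros [j [Hj e]]. apply (Permutation_in _ (Permutation_sym Hperm)), in_map_iff.
    exists j. split; auto. apply in_seq. lia.
Qed.

Lemma RC_range u : In u s -> 0 <= u < 1.
Proof. intros H. apply RC_mem in H. destruct H as [j [_ ->]]. apply antip_range. Qed.

Lemma RC_antip_in j : (j < n)%nat -> In (antip (x j)) s.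
Proof. intros H. apply RC_mem. eauto. Qed.

(* If an arc between consecutive antipodes were longer than 1/2, all agents
   would lie in the opposite semicircle. *)
Lemma RC_short_arcs : ~ on_one_semicircle n x ->
  forall a b, In (a, b) (arcs s) -> a <= b <= a + 1/2.
Proof.
  intros Hns a b Hab.
  destruct (arc_bounds a0 t RC_sorted RC_range a b Hab) as [A1 A2].
  split; [lra|]. destruct (Rle_dec b (a + 1/2)) as [|Hgt]; auto. exfalso. apply Hns.
  exists (b + 1/2). intros j Hj. unfold in_arc, ccw.
  set (u := antip (x j)).
  assert (Hu : In u s) by (apply RC_antip_in; auto).
  destruct (arc_empty_inside a0 t RC_sorted RC_range a b u Hab Hu) as [N1 N2].
  pose proof (RC_range u Hu) as Hur.
  assert (E : frac_part (x j - (b + 1/2)) = frac_part (u - b)).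
  { unfold u, antip. pose proof (frac_decomp (x j + /2)).
    replace (x j - (b + 1/2))
      with ((frac_part (x j + /2) - b) + IZR (Int_part (x j + /2) - 1)).
    - apply frac_shift.
    - rewrite minus_IZR. simpl. lra. }
  rewrite E. destruct (Rle_dec b u); [rewrite frac_id | rewrite frac_idm1]; lra.
Qed.

(* The endpoints of every arc are antipodes of agents, hence at least
   1/2 - maxdist from any point. *)
Lemma RC_endpoints_far w a b : In (a, b) (arcs s) ->
  1/2 - maxdist x n w <= dist w a /\ 1/2 - maxdist x n w <= dist w b.
Proof.
  intros Hab.
  assert (Hfar : forall u, In u s -> 1/2 - maxdist x n w <= dist w u).
  { intros u Hu. apply RC_mem in Hu. destruct Hu as [j [Hj ->]]. rewrite dist_antip.
    pose proof (maxdist_ge x n w j Hj). lra. }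
  destruct (arc_endpoints a0 t RC_sorted RC_range a b Hab) as [Ha [Hb|Hb]].
  - auto.
  - split; auto. replace b with ((b - 1) + IZR 1) by (simpl; ring). rewrite dist_shift. auto.
Qed.

Section ShortArcs.
Hypothesis Hshort : forall a b, In (a, b) (arcs s) -> a <= b <= a + 1/2.

(* Antipodes of agents are not strictly inside any arc, so are far from midpoints. *)
Lemma RC_midpoint_far j a b : (j < n)%nat -> In (a, b) (arcs s) ->
  (b - a) / 2 <= dist (antip (x j)) ((a + b) / 2).
Proof.
  intros Hj Hab. destruct (arc_bounds a0 t RC_sorted RC_range a b Hab) as [A1 A2].
  destruct (arc_empty_inside a0 t RC_sorted RC_range a b _ Hab (RC_antip_in j Hj)) as [N1 N2].
  apply arc_far; auto. apply antip_range.
Qed.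

(* For an agent z, no arc contains its antipode, so every midpoint error at z
   is the nonpositive "integer" correction. *)
Lemma RC_err_agent i a b : (i < n)%nat -> In (a, b) (arcs s) ->
  midpt_err (b - a) (dist (x i) ((a + b) / 2))
  <= - Rsqr (Rmax 0 ((b - a) / 2 - dist (x i) ((a + b) / 2))).
Proof.
  intros Hi Hab. unfold midpt_err.
  rewrite (Rmax_left 0); [unfold Rsqr at 1; lra|].
  pose proof (RC_midpoint_far i a b Hi Hab) as Hfar.
  rewrite dist_sym, dist_antip, dist_sym in Hfar. lra.
Qed.

Lemma RC_truthful_cost i : (i < n)%nat ->
  cost (rc_of_sorted s) (x i) <= 1/4 - Rsqr (1/2 - maxdist x n (x i)).
Proof.
  intros Hi. set (z := x i). set (F := maxdist x n z).
  set (E := fun a b => midpt_err (b - a) (dist z ((a + b) / 2))).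
  set (V := fun a b => Rsqr (Rmax 0 ((b - a) / 2 - dist z ((a + b) / 2)))).
  assert (HF : F <= 1/2) by (apply maxdist_le; [lra | intros; apply dist_range]).
  unfold s. rewrite rc_cost_formula by (apply RC_sorted || exact Hshort). fold s.
  (* the arc [a,b] containing z *)
  destruct (arcs_cover_rep a0 t z RC_sorted RC_range (Hval i Hi)) as [a [b [v [Hab [Hv Hvz]]]]].
  destruct (Hshort a b Hab) as [_ Hlen].
  destruct (arc_inside_dists a b v Hv Hlen) as [I1 [I2 I3]]. rewrite Hvz in I1, I2, I3.
  destruct (RC_endpoints_far z a b Hab) as [Da Db]. fold F in Da, Db.
  assert (Hdeep : 1/2 - F <= (b - a) / 2 - dist z ((a + b) / 2))
    by (rewrite I3; unfold Rabs; destruct Rcase_abs; lra).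
  assert (Hsq : Rsqr (1/2 - F) <= V a b).
  { apply sqr_le. split; [lra|]. eapply Rle_trans; [exact Hdeep | apply Rmax_r]. }
  assert (HE : forall a' b', In (a', b') (arcs s) -> E a' b' <= - V a' b')
    by (intros; apply RC_err_agent; auto).
  assert (Hsum : sumA (arcs s) E <= E a b).
  { apply sumA_le_term; auto. intros a' b' Hab'. pose proof (HE a' b' Hab').
    pose proof (Rle_0_sqr (Rmax 0 ((b' - a') / 2 - dist z ((a' + b') / 2)))). unfold V in *. lra. }
  pose proof (HE a b Hab). unfold E in *. lra.
Qed.

(* Lower bound on the cost of RC at any point z, in terms of any agent j:
   only the arc containing z can have a negative correction, and it is at
   most (1/2 - d(z, x_j))^2 in size. *)
Lemma RC_cost_lower z j : 0 <= z < 1 -> (j < n)%nat ->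
  1/4 - Rsqr (1/2 - dist z (x j)) <= cost (rc_of_sorted s) z.
Proof.
  intros Hz Hj. set (M := 1/2 - dist z (x j)).
  assert (HM : 0 <= M) by (unfold M; pose proof (dist_range z (x j)); lra).
  unfold s. rewrite rc_cost_formula by (apply RC_sorted || exact Hshort). fold s.
  set (V := fun a b => Rsqr (Rmax 0 ((b - a) / 2 - dist z ((a + b) / 2)))).
  assert (H1 : -1 * sumA (arcs s) V
               <= sumA (arcs s) (fun a b => midpt_err (b - a) (dist z ((a + b) / 2)))).
  { rewrite <- sumA_scale. apply sumA_le. intros a b _.
    pose proof (midpt_err_bounds (b - a) (dist z ((a + b) / 2))). unfold V. lra. }
  assert (H2 : sumA (arcs s) V <= Rsqr M).
  { apply (arcs_sum_single a0 t RC_sorted RC_range z); auto.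
    - apply Rle_0_sqr.
    - intros a b Hab. unfold V. split; [apply Rle_0_sqr|]. apply sqr_le.
      split; [apply Rmax_l|]. apply Rmax_lub; auto.
      pose proof (RC_midpoint_far j a b Hj Hab).
      pose proof (dist_triangle (antip (x j)) z ((a + b) / 2)).
      rewrite (dist_sym (antip (x j)) z), dist_antip in *. unfold M. lra.
    - intros a b Hab N1 N2. unfold V.
      destruct (arc_bounds a0 t RC_sorted RC_range a b Hab).
      pose proof (arc_far a b z ltac:(assumption) (Hshort a b Hab) Hz N1 N2).
      rewrite Rmax_left by lra. unfold Rsqr; ring. }
  lra.
Qed.

(* The maximum cost of RC is at most 1/2 - g^2/2 for the length g of any arc:
   each midpoint is at least g'/2 away from all antipodes, i.e. within
   1/2 - g'/2 of all agents, and the arc lengths add up to 1. *)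
Lemma RC_mc_upper a b : In (a, b) (arcs s) ->
  mc n (rc_of_sorted s) x <= 1/2 - Rsqr (b - a) / 2.
Proof.
  intros Hab. unfold mc, mc_pt. rewrite expect_rc.
  assert (Hub : sumA (arcs s) (fun a b => (b - a) * maxdist x n ((a + b) / 2))
                <= sumA (arcs s) (fun a b => 1/2 * (b - a) + (-1/2) * Rsqr (b - a))).
  { apply sumA_le. intros a' b' Hab'. destruct (Hshort a' b' Hab').
    replace (1/2 * (b' - a') + (-1/2) * Rsqr (b' - a'))
      with ((b' - a') * (1/2 - (b' - a') / 2)) by (unfold Rsqr; field).
    apply Rmult_le_compat_l; [lra|].
    apply maxdist_le; [lra|]. intros j Hj.
    pose proof (RC_midpoint_far j a' b' Hj Hab') as Hfar.
    rewrite dist_sym, dist_antip in Hfar. lra. }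
  rewrite sumA_plus, !sumA_scale in Hub.
  assert (Hlen : sumA (arcs s) (fun a b => b - a) = 1) by (apply (arcs_telescope (fun u => u)); intros; ring).
  assert (Hsq : Rsqr (b - a) <= sumA (arcs s) (fun a b => Rsqr (b - a)))
    by (apply (sumA_ge_term _ (fun a b => Rsqr (b - a))); auto; intros; apply Rle_0_sqr).
  lra.
Qed.

(* The optimal maximum cost is at least 1/2 - g/2 where g is the length of
   the arc containing the facility: one of its endpoints, an antipode, is
   within g/2. *)
Lemma RC_opt_lower w a b v : In (a, b) (arcs s) -> a <= v <= b ->
  (forall y, dist v y = dist w y) -> 1/2 - (b - a) / 2 <= maxdist x n w.
Proof.
  intros Hab Hv Hvw. destruct (Hshort a b Hab) as [_ Hlen].
  destruct (arc_inside_dists a b v Hv Hlen) as [I1 [I2 _]]. rewrite Hvw in I1, I2.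
  destruct (RC_endpoints_far w a b Hab). lra.
Qed.

Lemma RC_approx y : mc n (rc_of_sorted s) x <= 3/2 * mc_pt n x y.
Proof.
  unfold mc_pt. rewrite (maxdist_ext x n y (frac_part y)) by (intros; symmetry; apply dist_frac_l).
  destruct (arcs_cover_rep a0 t (frac_part y) RC_sorted RC_range (frac_range y))
    as [a [b [v [Hab [Hv Hvw]]]]].
  pose proof (RC_mc_upper a b Hab). pose proof (RC_opt_lower _ a b v Hab Hv Hvw).
  destruct (Hshort a b Hab). unfold Rsqr in *. nra.
Qed.
End ShortArcs.
End RC.

(** * Analysis of LRM *)

Definition lrm_out (l r : R) : dist_G := [(/4, l); (/4, r); (/2, l + ccw l r / 2)].

Section LRM.
Variable n : nat.
Variable y : nat -> R.
Variables l r : R.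
Hypothesis Hma : minimal_arc n y l r.
Hypothesis HL : ccw l r <= 1/2.

Let L := ccw l r.
Let c := l + ccw l r / 2.

Lemma L_range : 0 <= L <= 1/2.
Proof. pose proof (ccw_range l r). unfold L. lra. Qed.

Lemma agents_in_arc j : (j < n)%nat -> 0 <= ccw l (y j) <= L.
Proof. intros H. destruct Hma as [_ [_ [A _]]]. split; [apply ccw_range | apply A; auto]. Qed.

Lemma LRM_cost z : cost (lrm_out l r) z = /4 * dist z l + /4 * dist z r + /2 * dist z c.
Proof. unfold cost, lrm_out. apply expect3. Qed.

Lemma in_arc_dists u : ccw l u <= L ->
  dist u l = ccw l u /\ dist u r = L - ccw l u /\ dist u c = Rabs (ccw l u - L / 2).
Proof.
  intros H. pose proof (ccw_range l u). pose proof L_range.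
  rewrite (dist_ccw l u l), (dist_ccw l u r), ccw_self, Rminus_0_r.
  split; [|split].
  - rewrite dZ_small; rewrite Rabs_right; lra.
  - rewrite dZ_small; rewrite Rabs_left1; fold L; lra.
  - rewrite dist_sym. unfold c. rewrite dist_offset.
    replace (ccw l r / 2 - ccw l u) with (- (ccw l u - L / 2)) by (unfold L; field).
    rewrite dZ_opp. apply dZ_small. unfold Rabs; destruct Rcase_abs; lra.
Qed.

Lemma dist_lr : dist l r = L.
Proof.
  rewrite dist_sym. pose proof L_range.
  destruct (in_arc_dists r ltac:(unfold L; lra)) as [-> _]. auto.
Qed.

Lemma LRM_cost_lower z j : (j < n)%nat -> dist z (y j) <= 2 * cost (lrm_out l r) z.
Proof.
  intros Hj. rewrite LRM_cost. pose proof (agents_in_arc j Hj) as Ha.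
  pose proof (dist_triangle z c (y j)).
  assert (dist c (y j) <= L / 2).
  { rewrite dist_sym. destruct (in_arc_dists (y j) ltac:(lra)) as [_ [_ ->]].
    unfold Rabs; destruct Rcase_abs; lra. }
  pose proof (dist_triangle l z r). rewrite dist_lr, (dist_sym l z) in *. lra.
Qed.

(* An agent pays half its distance to an endpoint of the arc (the farther one). *)
Lemma LRM_truthful_cost i : (i < n)%nat ->
  exists j, (j < n)%nat /\ cost (lrm_out l r) (y i) = dist (y i) (y j) / 2.
Proof.
  intros Hi. destruct Hma as [[jl [Hjl El]] [[jr [Hjr Er]] _]].
  destruct (agents_in_arc i Hi) as [A1 A2].
  destruct (in_arc_dists (y i) A2) as [D1 [D2 D3]].
  rewrite LRM_cost, D1, D2, D3.
  destruct (Rle_dec (L / 2) (ccw l (y i))).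
  - exists jl. split; auto. rewrite El, D1. rewrite Rabs_right by lra. lra.
  - exists jr. split; auto. rewrite Er, D2. rewrite Rabs_left by lra. lra.
Qed.

(* The endpoints serve all agents within L and the midpoint within L/2, while
   any facility is at least L/2 from l or from r. *)
Lemma LRM_approx q : mc n (lrm_out l r) y <= 3/2 * mc_pt n y q.
Proof.
  destruct Hma as [[jl [Hjl El]] [[jr [Hjr Er]] _]].
  unfold mc, mc_pt, lrm_out. rewrite expect3. pose proof L_range.
  assert (M1 : maxdist y n l <= L).
  { apply maxdist_le; [lra|]. intros j Hj. destruct (agents_in_arc j Hj) as [_ Ha].
    destruct (in_arc_dists (y j) Ha) as [D1 _]. rewrite dist_sym, D1. lra. }
  assert (M2 : maxdist y n r <= L).
  { apply maxdist_le; [lra|]. intros j Hj. destruct (agents_in_arc j Hj) as [Ha1 Ha].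
    destruct (in_arc_dists (y j) Ha) as [_ [D2 _]]. rewrite dist_sym, D2. lra. }
  assert (M3 : maxdist y n c <= L / 2).
  { apply maxdist_le; [lra|]. intros j Hj. destruct (agents_in_arc j Hj) as [Ha1 Ha2].
    destruct (in_arc_dists (y j) Ha2) as [_ [_ D3]]. rewrite dist_sym, D3.
    unfold Rabs; destruct Rcase_abs; lra. }
  assert (Lq : L / 2 <= maxdist y n q).
  { pose proof (maxdist_ge y n q jl Hjl) as Q1. pose proof (maxdist_ge y n q jr Hjr) as Q2.
    rewrite El in Q1. rewrite Er in Q2.
    pose proof (dist_triangle l q r) as Q3. rewrite dist_lr, (dist_sym l q) in Q3. lra. }
  fold c. lra.
Qed.

Lemma LRM_cost_antip_in z : ccw l (antip z) <= L -> 1/4 <= cost (lrm_out l r) z.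
Proof.
  intros H. rewrite LRM_cost.
  destruct (in_arc_dists (antip z) H) as [D1 [D2 D3]].
  assert (Hz : forall u, dist z u = 1/2 - dist (antip z) u).
  { intros u. rewrite (dist_sym (antip z)), dist_antip, dist_sym. ring. }
  rewrite !Hz, D1, D2, D3. pose proof (ccw_range l (antip z)). pose proof L_range.
  unfold Rabs; destruct Rcase_abs; lra.
Qed.
End LRM.

Lemma semicircle_of_deviation n x i v l L : (i < n)%nat -> L <= 1/2 ->
  all_in_arc n (deviate x i v) l L -> L < ccw l (antip (x i)) -> on_one_semicircle n x.
Proof.
  intros Hi HL Hall Hgt.
  set (p := ccw l (x i)). pose proof (ccw_range l (x i)) as Hp. fold p in Hp.
  assert (Ht : ccw l (antip (x i)) = frac_part (p + 1/2)).
  { unfold ccw, antip, p. pose proof (frac_decomp (x i + /2)). pose proof (frac_decomp (x i - l)).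
    replace (frac_part (x i + /2) - l)
      with ((frac_part (x i - l) + 1/2) + IZR (Int_part (x i - l) - Int_part (x i + /2))).
    - apply frac_shift.
    - rewrite minus_IZR. lra. }
  assert (Hoth : forall j, (j < n)%nat -> j <> i -> ccw l (x j) <= L).
  { intros j Hj Hne. specialize (Hall j Hj). unfold in_arc, deviate in Hall.
    apply Nat.eqb_neq in Hne. rewrite Hne in Hall. auto. }
  destruct (Rlt_dec p (1/2)).
  - (* x_i is within half a turn after l: the arc from l works *)
    exists l. intros j Hj. unfold in_arc. destruct (Nat.eq_dec j i) as [->|].
    + fold p. lra.
    + pose proof (Hoth j Hj ltac:(assumption)). lra.
  - (* otherwise the semicircle starting at x_i contains everyone *)
    rewrite Ht, frac_id1 in Hgt by lra.
    exists (x i). intros j Hj. unfold in_arc. destruct (Nat.eq_dec j i) as [->|].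
    + rewrite ccw_self. lra.
    + pose proof (Hoth j Hj ltac:(assumption)). rewrite (ccw_rebase l). fold p.
      pose proof (ccw_range l (x j)). rewrite frac_idm1; lra.
Qed.

Module RLe <: Orders.TotalLeBool.
  Definition t := R.
  Definition leb (x y : R) : bool := if Rle_dec x y then true else false.
  Theorem leb_total : forall a1 a2, leb a1 a2 = true \/ leb a2 a1 = true.
  Proof. intros a b. unfold leb. destruct (Rle_dec a b), (Rle_dec b a); auto. lra. Qed.
End RLe.
Module RSort := Sort RLe.

Lemma sort_exists (l : list R) : exists s, Permutation s l /\ Sorted Rle s.
Proof.
  exists (RSort.sort l). split; [apply Permutation_sym, RSort.Permuted_sort|].
  assert (Hle : forall a b, is_true (RLe.leb a b) -> a <= b)
    by (intros a b; unfold is_true, RLe.leb; destruct (Rle_dec a b); easy).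
  induction (RSort.Sorted_sort l) as [|a s Hs IH Hhd]; constructor; auto.
  destruct Hhd; constructor; auto.
Qed.

(* A minimal arc exists: start at the agent minimising the length of the
   arc, starting there, that covers everyone. *)
Lemma minimal_arc_exists n x : (1 <= n)%nat -> exists l r, minimal_arc n x l r.
Proof.
  intros Hn.
  set (cover_len := fun k => maxf (fun j => ccw (x k) (x j)) n).
  destruct (argmin_nat cover_len n Hn) as [k0 [Hk0 Hmin]].
  destruct (maxf_attained (fun j => ccw (x k0) (x j)) n Hn) as [jr [Hjr Er]];
    [intros; apply ccw_range|].
  exists (x k0), (x jr). split; [exists k0; auto|]. split; [exists jr; auto|]. split.
  - intros j Hj. unfold in_arc. rewrite <- Er. apply (maxf_ge (fun j => ccw (x k0) (x j))). auto.
  - (* any covering arc [l', l'+L'] contains the arc starting at its first agent *)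
    intros l' L' HL' Hall.
    destruct (argmin_nat (fun j => ccw l' (x j)) n Hn) as [ks [Hks Hfirst]].
    assert (cover_len ks <= L').
    { apply maxf_le; auto. intros j Hj. rewrite (ccw_rebase l').
      pose proof (Hfirst j Hj). pose proof (Hall j Hj). unfold in_arc in *.
      pose proof (ccw_range l' (x j)). pose proof (ccw_range l' (x ks)).
      rewrite frac_id; lra. }
    pose proof (Hmin ks Hks) as Hk. unfold cover_len in Hk at 1. rewrite Er in Hk. lra.
Qed.

Lemma M_exists n x : (1 <= n)%nat -> exists P, M_out n x P.
Proof.
  intros Hn. destruct (classic (on_one_semicircle n x)) as [Hs|Hs].
  - destruct (minimal_arc_exists n x Hn) as [l [r H]].
    exists (lrm_out l r). left. split; auto. exists l, r. auto.
  - destruct (sort_exists (map (fun j => antip (x j)) (seq 0 n))) as [s [Hp Hso]].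
    exists (rc_of_sorted s). right. split; auto. exists s. auto.
Qed.

Lemma semicircle_arc_short n x l r :
  on_one_semicircle n x -> minimal_arc n x l r -> ccw l r <= 1/2.
Proof.
  intros [c Hc] [_ [_ [_ H]]]. replace (1/2) with (/2) by field. apply (H c); [lra | auto].
Qed.

Lemma M_out_cases n x P : (1 <= n)%nat -> M_out n x P ->
  (on_one_semicircle n x /\
   exists l r, minimal_arc n x l r /\ ccw l r <= 1/2 /\ P = lrm_out l r) \/
  (~ on_one_semicircle n x /\
   exists a0 t, Permutation (a0 :: t) (map (fun j => antip (x j)) (seq 0 n)) /\
     Sorted Rle (a0 :: t) /\ P = rc_of_sorted (a0 :: t) /\
     (forall a b, In (a, b) (arcs (a0 :: t)) -> a <= b <= a + 1/2)).
Proof.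
  intros Hn [[Hs [l [r [Hma E]]]]|[Hs [s [Hp [Hso E]]]]].
  - left. split; auto. exists l, r. split; [auto | split; [|auto]].
    eapply semicircle_arc_short; eauto.
  - right. split; auto. destruct s as [|a0 t].
    + apply Permutation_length in Hp. rewrite length_map, length_seq in Hp. simpl in Hp. lia.
    + exists a0, t. do 3 (split; auto). eapply RC_short_arcs; eauto.
Qed.

(* Under any output of M, a point pays at least half its distance to each agent
   (for RC: 1/4 - (1/2 - d)^2 = d - d^2 >= d/2 as d <= 1/2). *)
Lemma M_cost_lower n x P z j : (1 <= n)%nat -> M_out n x P -> 0 <= z < 1 -> (j < n)%nat ->
  dist z (x j) / 2 <= cost P z.
Proof.
  intros Hn HM Hz Hj. pose proof (dist_range z (x j)).
  destruct (M_out_cases n x P Hn HM)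
    as [[_ [l [r [Hma [HL ->]]]]]|[_ [a0 [t [Hp [Hso [-> Hg]]]]]]].
  - pose proof (LRM_cost_lower n x l r Hma HL z j Hj). lra.
  - pose proof (RC_cost_lower n x a0 t Hp Hso Hg z j Hz Hj). unfold Rsqr in *. nra.
Qed.

Lemma M_truthful_cost n x P i : (1 <= n)%nat -> valid_profile n x -> (i < n)%nat ->
  M_out n x P ->
  (exists j, (j < n)%nat /\ cost P (x i) = dist (x i) (x j) / 2) \/
  (~ on_one_semicircle n x /\
   exists j, (j < n)%nat /\ cost P (x i) <= 1/4 - Rsqr (1/2 - dist (x i) (x j))).
Proof.
  intros Hn Hval Hi HM.
  destruct (M_out_cases n x P Hn HM)
    as [[_ [l [r [Hma [HL ->]]]]]|[Hs [a0 [t [Hp [Hso [-> Hg]]]]]]].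
  - left. apply LRM_truthful_cost; auto.
  - right. split; auto. destruct (maxdist_attained x n (x i) Hn) as [j [Hj Ej]].
    exists j. split; auto. rewrite <- Ej. eapply RC_truthful_cost; eauto.
Qed.

Lemma deviate_other x i v j : j <> i -> deviate x i v j = x j.
Proof. intros Hj. unfold deviate. apply Nat.eqb_neq in Hj. rewrite Hj. auto. Qed.

(* When the truthful profile is not on one semicircle, after agent i
   deviates its cost still obeys the RC lower bound for the other agents:
   an LRM output must then cover the antipode of x_i, costing x_i 1/4. *)
Lemma deviation_cost_lower n x i v P' j : (1 <= n)%nat -> valid_profile n x ->
  (i < n)%nat -> ~ on_one_semicircle n x -> M_out n (deviate x i v) P' ->
  (j < n)%nat -> j <> i ->
  1/4 - Rsqr (1/2 - dist (x i) (x j)) <= cost P' (x i).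
Proof.
  intros Hn Hval Hi Hns HM' Hj Hji.
  destruct (M_out_cases n _ P' Hn HM')
    as [[_ [l [r [Hma [HL ->]]]]]|[_ [a0 [t [Hp [Hso [-> Hg]]]]]]].
  - pose proof (Rle_0_sqr (1/2 - dist (x i) (x j))).
    enough (1/4 <= cost (lrm_out l r) (x i)) by lra.
    apply LRM_cost_antip_in; auto.
    destruct (Rle_dec (ccw l (antip (x i))) (ccw l r)) as [|Hgt]; auto.
    exfalso. apply Hns. destruct Hma as [_ [_ [Hcov _]]].
    apply (semicircle_of_deviation n x i v l (ccw l r)); auto. lra.
  - rewrite <- (deviate_other x i v j Hji). eapply RC_cost_lower; eauto.
Qed.

Lemma M_strategyproof n x i v P P' : (1 <= n)%nat -> valid_profile n x -> (i < n)%nat ->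
  M_out n x P -> M_out n (deviate x i v) P' -> cost P (x i) <= cost P' (x i).
Proof.
  intros Hn Hval Hi HM HM'. set (z := x i). pose proof (Hval i Hi) as Hz.
  (* the deviator's own entry in the deviated profile gives cost P' z >= 0 *)
  assert (Hnn : 0 <= cost P' z).
  { pose proof (M_cost_lower n _ P' z i Hn HM' Hz Hi).
    pose proof (dist_range z (deviate x i v i)). lra. }
  destruct (M_truthful_cost n x P i Hn Hval Hi HM) as [[j [Hj Ec]]|[Hns [j [Hj Ec]]]];
    fold z in Ec; destruct (Nat.eq_dec j i) as [->|Hji].
  - fold z in Ec. rewrite dist_refl in Ec. lra.
  - rewrite Ec, <- (deviate_other x i v j Hji). apply (M_cost_lower n); auto.
  - fold z in Ec. rewrite dist_refl in Ec. unfold Rsqr in Ec. lra.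
  - pose proof (deviation_cost_lower n x i v P' j Hn Hval Hi Hns HM' Hj Hji) as Hdev.
    fold z in Hdev. lra.
Qed.

Lemma M_approx n x P y : (1 <= n)%nat -> M_out n x P -> mc n P x <= 3/2 * mc_pt n x y.
Proof.
  intros Hn HM.
  destruct (M_out_cases n x P Hn HM)
    as [[_ [l [r [Hma [HL ->]]]]]|[_ [a0 [t [Hp [Hso [-> Hg]]]]]]].
  - apply LRM_approx; auto.
  - eapply RC_approx; eauto.
Qed.

Theorem theorem4 (n : nat) (hn : (1 <= n)%nat) :
  (* M is well defined: it has an output on every profile *)
  (forall x, valid_profile n x -> exists P, M_out n x P) /\
  (* strategyproofness *)
  (forall x i v P P',
      valid_profile n x -> (i < n)%nat -> 0 <= v < 1 ->
      M_out n x P -> M_out n (deviate x i v) P' ->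
      cost P' (x i) >= cost P (x i)) /\
  (* 3/2-approximation of the maximum cost *)
  (forall x P, valid_profile n x -> M_out n x P ->
      forall y, mc n P x <= 3 / 2 * mc_pt n x y).
Proof.
  split; [|split].
  - intros x _. apply M_exists; auto.
  - intros x i v P P' Hval Hi _ HM HM'. apply Rle_ge. eapply M_strategyproof; eauto.
  - intros x P _ HM y. apply M_approx; auto.
Qed.
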